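(* Let $s\geq 3$, let $p,q$ be coprime integers with $q>0$, and let $k\in G_{K_s}(p,q)$ satisfy $M=k^q$, $L=k^{-p}$. Suppose $G_{K_s}(p,q)$ acts (on the right) on $\mathbb{R}$ by orientation-preserving homeomorphisms. If $xk>x$ for every $x\in\mathbb{R}$, then $xl>x$ for every $x\in\mathbb{R}$.
   Context: Let $R=c\,l\,c\,l^{-1}c^{-1}l^{-s}c^{-1}l^{-1}c\,l\,c\,l^{s-1}$, $M=c$ and $L=c^{-(2s-2)}\,l\,c\,l^{s}\,c\,l^{s}\,c\,l\,c^{-(2s+9)}$, and $G_{K_s}(p,q)=\langle c,l\mid R,\ M^pL^q\rangle$. For an action we write $xg$ for the image of $x$ under $g$, and $xg_1g_2=(xg_1)g_2$. *)

(* the group G_{K_s}(p,q) is given by its presentation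
   (words in c, l modulo the congruence generated by free reduction and the
   two relators), and an action on R is given by the images of the
   generators (orientation-preserving homeomorphisms) killing the relators. *)
From Stdlib Require Import Reals ZArith List.
Import ListNotations.
Open Scope R_scope.

Inductive gen : Type := gc | gl.

(* a letter: (generator, is_inverse) *)
Definition letter : Type := (gen * bool)%type.
Definition word : Type := list letter.

Definition flip (a : letter) : letter := (fst a, negb (snd a)).
Definition winv (w : word) : word := rev (map flip w).

Fixpoint wrep (n : nat) (w : word) : word :=
  match n with O => [] | S n' => w ++ wrep n' w end.

Definition wpow (w : word) (n : Z) : word :=
  if (0 <=? n)%Z then wrep (Z.abs_nat n) w else wrep (Z.abs_nat n) (winv w).

Definition c1 : word := [(gc, false)].
Definition l1 : word := [(gl, false)].

Definition relR (s : nat) : word :=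
  c1 ++ l1 ++ c1 ++ wpow l1 (-1) ++ wpow c1 (-1) ++ wpow l1 (- Z.of_nat s)
  ++ wpow c1 (-1) ++ wpow l1 (-1) ++ c1 ++ l1 ++ c1 ++ wpow l1 (Z.of_nat s - 1).

Definition wordM : word := c1.

Definition wordL (s : nat) : word :=
  wpow c1 (- (2 * Z.of_nat s - 2)) ++ l1 ++ c1 ++ wpow l1 (Z.of_nat s) ++ c1
  ++ wpow l1 (Z.of_nat s) ++ c1 ++ l1 ++ wpow c1 (- (2 * Z.of_nat s + 9)).

Definition relators (s : nat) (p q : Z) : list word :=
  [relR s; wpow wordM p ++ wpow (wordL s) q].

Inductive eqG (s : nat) (p q : Z) : word -> word -> Prop :=
| eqG_refl w : eqG s p q w w
| eqG_sym u v : eqG s p q u v -> eqG s p q v u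
| eqG_trans u v w : eqG s p q u v -> eqG s p q v w -> eqG s p q u w
| eqG_free u v a : eqG s p q (u ++ a :: flip a :: v) (u ++ v)
| eqG_rel u v r : In r (relators s p q) -> eqG s p q (u ++ r ++ v) (u ++ v).

(* right action: x (w1 w2) = (x w1) w2 *)
Definition act (f finv : gen -> R -> R) (w : word) (x : R) : R :=
  fold_left (fun (y : R) (a : letter) => if snd a then finv (fst a) y else f (fst a) y) w x.

Definition or_pres_homeo (h hinv : R -> R) : Prop :=
  continuity h /\ (forall x y, x < y -> h x < h y) /\
  (forall x, hinv (h x) = x) /\ (forall x, h (hinv x) = x).

Definition is_action (s : nat) (p q : Z) (f finv : gen -> R -> R) : Prop :=
  (forall g, or_pres_homeo (f g) (finv g)) /\
  (forall r, In r (relators s p q) -> forall x, act f finv r x = x).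

(* Write s = n+1 and A = l c l^n.  The relator R of G_{K_s}(p,q)
   is a rearrangement of the knot relation
       A (l c l) = c A (c l c)          (that is, l c l^s c l = c l c l^{s-1} c l c).
   In an action on R by increasing maps, if c moves every point to the right,
   this relation forces l to move every point to the right: for y = x·A,
       y·(l c l) = x·(c A c l c) > x·(A c l c) = y·(c l c) > y·(c l),
   and since the map of c l reflects the order, y·l > y.  Finally c = M = k^q
   with q > 0 and k moves points right, so c moves points right. *)
From Pilot Require Import Defs.
From Stdlib Require Import Reals ZArith List Lra Lia.
Import ListNotations.
Open Scope R_scope.

Lemma act_app (f finv : gen -> R -> R) (u v : word) (x : R) :
  act f finv (u ++ v) x = act f finv v (act f finv u x).
Proof. unfold act. apply fold_left_app. Qed.

Lemma winv_app (u v : word) : winv (u ++ v) = winv v ++ winv u.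
Proof. unfold winv. rewrite map_app, rev_app_distr. reflexivity. Qed.

Lemma winv_involutive (w : word) : winv (winv w) = w.
Proof.
  unfold winv. rewrite map_rev, rev_involutive, map_map.
  rewrite <- map_id. apply map_ext. intros [g b]. unfold flip. simpl.
  rewrite Bool.negb_involutive. reflexivity.
Qed.

Lemma wrep_comm (n : nat) (w : word) : wrep n w ++ w = w ++ wrep n w.
Proof.
  induction n as [|n IH]; simpl.
  - symmetry. apply app_nil_r.
  - rewrite <- app_assoc, IH. reflexivity.
Qed.

Lemma winv_wrep (n : nat) (w : word) : winv (wrep n w) = wrep n (winv w).
Proof.
  induction n as [|n IH]; simpl; [reflexivity|].
  rewrite winv_app, IH. apply wrep_comm.
Qed.

Lemma wpow_of_nat (w : word) (n : nat) : wpow w (Z.of_nat n) = wrep n w.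
Proof.
  unfold wpow. replace (0 <=? Z.of_nat n)%Z with true by (symmetry; apply Z.leb_le; lia).
  rewrite Zabs2Nat.id. reflexivity.
Qed.

Lemma wpow_of_neg_nat (w : word) (n : nat) :
  (0 < n)%nat -> wpow w (- Z.of_nat n) = wrep n (winv w).
Proof.
  intros Hn. unfold wpow.
  replace (0 <=? - Z.of_nat n)%Z with false by (symmetry; apply Z.leb_gt; lia).
  rewrite Zabs2Nat.abs_nat_spec, Z.abs_opp, Z.abs_eq, Nat2Z.id by lia. reflexivity.
Qed.

Section IncreasingAction.

Variables f finv : gen -> R -> R.
Hypothesis homeo : forall g, or_pres_homeo (f g) (finv g).

Definition moves_right (w : word) : Prop := forall x, act f finv w x > x.

Lemma act_letter_flip (a : letter) (x : R) : act f finv [a; flip a] x = x.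
Proof.
  destruct a as [g []]; destruct (homeo g) as (_ & _ & Hl & Hr); simpl; auto.
Qed.

Lemma act_winv_l (w : word) (x : R) : act f finv (winv w) (act f finv w x) = x.
Proof.
  revert x; induction w as [|a w IH]; intros x; [reflexivity|].
  change (a :: w) with ([a] ++ w).
  rewrite winv_app, !act_app, IH, <- act_app. apply act_letter_flip.
Qed.

Lemma act_winv_r (w : word) (x : R) : act f finv w (act f finv (winv w) x) = x.
Proof. rewrite <- (winv_involutive w) at 1. apply act_winv_l. Qed.

Lemma act_strict_mono (w : word) (x y : R) :
  x < y -> act f finv w x < act f finv w y.
Proof.
  revert x y; induction w as [|[g b] w IH]; intros x y Hxy; simpl; [exact Hxy|].
  apply IH. destruct (homeo g) as (_ & Hm & Hl & Hr). destruct b; simpl; [|auto].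
  destruct (Rlt_or_le (finv g x) (finv g y)) as [H|H]; [exact H|].
  destruct H as [H|H].
  - apply Hm in H. rewrite !Hr in H. lra.
  - apply (f_equal (f g)) in H. rewrite !Hr in H. lra.
Qed.

Lemma act_reflect (w : word) (x y : R) :
  act f finv w x < act f finv w y -> x < y.
Proof.
  intros H. destruct (Rlt_or_le x y) as [Hxy|[Hxy|Hxy]]; [exact Hxy| |].
  - apply (act_strict_mono w) in Hxy. lra.
  - subst. lra.
Qed.

Lemma act_eqG (s : nat) (p q : Z) (u v : word) :
  (forall r, In r (relators s p q) -> forall x, act f finv r x = x) ->
  eqG s p q u v -> forall x, act f finv u x = act f finv v x.
Proof.
  intros Hrel H; induction H as [w|u v _ IH|u v w _ IH1 _ IH2|u v a|u v r Hin];
    intros x.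
  - reflexivity.
  - symmetry. apply IH.
  - rewrite IH1. apply IH2.
  - change (a :: flip a :: v) with ([a; flip a] ++ v).
    rewrite !act_app, act_letter_flip. reflexivity.
  - rewrite !act_app, (Hrel r Hin). reflexivity.
Qed.

Lemma act_rotate (u v : word) :
  (forall x, act f finv (u ++ v) x = x) -> forall x, act f finv (v ++ u) x = x.
Proof.
  intros H x.
  set (y := act f finv (winv u) x).
  assert (Hy : act f finv u y = x) by apply act_winv_r.
  assert (Hvx : act f finv v x = y) by (rewrite <- Hy, <- act_app; apply H).
  rewrite act_app, Hvx. exact Hy.
Qed.

Lemma moves_right_app (u v : word) :
  moves_right u -> moves_right v -> moves_right (u ++ v).
Proof.
  intros Hu Hv x. rewrite act_app. specialize (Hu x). specialize (Hv (act f finv u x)). lra.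
Qed.

Lemma moves_right_wrep (w : word) (n : nat) :
  moves_right w -> (0 < n)%nat -> moves_right (wrep n w).
Proof.
  intros Hw Hn. induction n as [|[|n] IH]; [lia| |].
  - simpl. rewrite app_nil_r. exact Hw.
  - apply moves_right_app; [exact Hw|]. apply IH. lia.
Qed.

Lemma moves_right_of_relation (a c l : word) :
  (forall x, act f finv (a ++ (l ++ c ++ l)) x = act f finv (c ++ a ++ (c ++ l ++ c)) x) ->
  moves_right c -> moves_right l.
Proof.
  intros Hrel Hc y.
  set (x := act f finv (winv a) y).
  assert (Hy : act f finv a x = y) by apply act_winv_r.
  assert (Hlcl : act f finv (c ++ l) (act f finv l y) = act f finv (a ++ (l ++ c ++ l)) x).
  { rewrite (act_app _ _ a), Hy, <- act_app. reflexivity. }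
  assert (Hshift : act f finv (c ++ l ++ c) y < act f finv (c ++ a ++ (c ++ l ++ c)) x).
  { rewrite (act_app _ _ c (a ++ _)), (act_app _ _ a), <- Hy.
    apply act_strict_mono, act_strict_mono, Hc. }
  assert (Hclc : act f finv (c ++ l) y < act f finv (c ++ l ++ c) y).
  { rewrite app_assoc, (act_app _ _ (c ++ l) c). apply Hc. }
  apply (act_reflect (c ++ l)). rewrite Hlcl, Hrel. lra.
Qed.

End IncreasingAction.

(* The word A = l c l^n, for s = n + 1.  (The generator word c1 is written
   Defs.c1 because the Reals library also exports a name c1.) *)
Definition knotA (n : nat) : word := l1 ++ Defs.c1 ++ wrep n l1.

(* relR is the rotated form  (c l c) (A l c l)^{-1} (c A)  of the knot relation. *)
Lemma relR_split (n : nat) :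
  relR (S n) = (Defs.c1 ++ l1 ++ Defs.c1) ++ winv (knotA n ++ (l1 ++ Defs.c1 ++ l1)) ++ (Defs.c1 ++ knotA n).
Proof.
  unfold relR, knotA.
  rewrite wpow_of_neg_nat by lia.
  replace (Z.of_nat (S n) - 1)%Z with (Z.of_nat n) by lia.
  rewrite wpow_of_nat, !winv_app, winv_wrep. simpl. rewrite <- !app_assoc. reflexivity.
Qed.

Lemma knot_relation (f finv : gen -> R -> R) (n : nat) :
  (forall g, or_pres_homeo (f g) (finv g)) ->
  (forall x, act f finv (relR (S n)) x = x) ->
  forall x, act f finv (knotA n ++ (l1 ++ Defs.c1 ++ l1)) x
          = act f finv (Defs.c1 ++ knotA n ++ (Defs.c1 ++ l1 ++ Defs.c1)) x.
Proof.
  intros homeo HR x.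
  set (W := knotA n ++ (l1 ++ Defs.c1 ++ l1)).
  rewrite relR_split in HR.
  assert (Hrot := act_rotate f finv homeo _ _ HR).
  rewrite <- (Hrot (act f finv W x)), !act_app, act_winv_l by exact homeo.
  rewrite <- !act_app. reflexivity.
Qed.

Theorem lemma3p4 (s : nat) (p q : Z) (f finv : gen -> R -> R) (k : word) :
  (3 <= s)%nat -> Z.gcd p q = 1%Z -> (0 < q)%Z ->
  eqG s p q wordM (wpow k q) -> eqG s p q (wordL s) (wpow k (- p)) ->
  is_action s p q f finv ->
  (forall x : R, act f finv k x > x) ->
  forall x : R, act f finv l1 x > x.
Proof.
  intros Hs _ Hq HM _ [homeo Hrel] Hk.
  destruct s as [|n]; [lia|].
  assert (Hc : moves_right f finv Defs.c1).
  { intros x. rewrite (act_eqG f finv homeo _ _ _ _ _ Hrel HM).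
    rewrite <- (Z2Nat.id q), wpow_of_nat by lia.
    apply moves_right_wrep; [exact Hk | lia]. }
  apply (moves_right_of_relation f finv homeo (knotA n) Defs.c1 l1); [|exact Hc].
  apply knot_relation; [exact homeo|].
  apply Hrel. left. reflexivity.
Qed.
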